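(* For every fixed graph $H$ there is a constant $c_H$, depending only on $H$, such that the following holds. Let $G=(X\cup Y,E)$ be a simple $H$-minor-free bipartite graph with bipartition $(X,Y)$ such that $N(u)\not\subseteq N(v)$ for all distinct $u,v\in Y$. Then $|Y|\le c_H|X|$. *)

From mathcomp Require Import all_boot.
Set Implicit Arguments. Unset Strict Implicit. Unset Printing Implicit Defensive.

Definition simple_graph (T : finType) (e : rel T) : Prop :=
  symmetric e /\ irreflexive e.

Definition nbhd (T : finType) (e : rel T) (u : T) : {set T} := [set w | e u w].

Definition connected_in (T : finType) (e : rel T) (S : {set T}) : Prop :=
  forall x y, x \in S -> y \in S ->
    connect [rel a b | [&& a \in S, b \in S & e a b]] x y.

Definition is_minor (V : finType) (eH : rel V) (T : finType) (e : rel T) : Prop :=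
  exists phi : V -> {set T},
    [/\ forall v, phi v != set0,
        forall v, connected_in e (phi v),
        forall u v, u != v -> [disjoint phi u & phi v]
      & forall u v, eH u v -> exists x y, [/\ x \in phi u, y \in phi v & e x y]].

Definition minor_free (V : finType) (eH : rel V) (T : finType) (e : rel T) : Prop :=
  ~ is_minor eH e.

Definition bipartition (T : finType) (e : rel T) (X Y : {set T}) : Prop :=
  [/\ X :&: Y = set0, X :|: Y = setT &
      forall x y, e x y -> (x \in X /\ y \in Y) \/ (x \in Y /\ y \in X)].

(* Greedily choose C, a subset of Y, and for each y in C a neighbour f(y), so
   that contracting every star y -- f(y) and deleting Y \ C yields a graph M on
   X in which every merge created a new edge, while N(y) is a clique of M for
   every y in Y \ C.  M is a minor of G, so by Mader's theorem (degree sum at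
   least (2^(h+1) - 2) times the order forces a K_h-minor; here h = |V(H)|)
   every nonempty subgraph of M has degree sum below g per vertex.  Hence
   |C| <= 2|E(M)| < g|X|; and as such a sparse graph has at most 2^g |X| + 1
   cliques, while the neighbourhoods of Y \ C are pairwise distinct cliques,
   |Y \ C| <= 2^g |X| + 1. *)

From mathcomp Require Import all_boot zify.
Set Implicit Arguments. Unset Strict Implicit. Unset Printing Implicit Defensive.

Section Graphs.

Variable W : finType.
Implicit Types (F G : rel W) (B S : {set W}).

Definition restrict F B : rel W := [rel a b | [&& a \in B, b \in B & F a b]].

Lemma restrict_connect_sym F B : symmetric F -> connect_sym (restrict F B).
Proof.
move=> sF; apply: sym_connect_sym => a b; rewrite /restrict /=.
by rewrite sF; case: (a \in B); case: (b \in B).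
Qed.

Lemma connected_in_lift F G B B' :
  symmetric G -> connected_in F B ->
  (forall a b, a \in B -> b \in B -> F a b -> connect (restrict G B') a b) ->
  (forall z, z \in B' -> exists2 x, x \in B & connect (restrict G B') z x) ->
  connected_in G B'.
Proof.
move=> sG cB edge hub a b aB' bB'.
have [xa xaB axa] := hub a aB'; have [xb xbB bxb] := hub b bB'.
have xab : connect (restrict G B') xa xb.
  by apply: connect_sub (cB xa xb xaB xbB) => x y /and3P[xB yB Fxy]; apply: edge.
apply: connect_trans axa (connect_trans xab _).
by rewrite (restrict_connect_sym _ sG).
Qed.

Definition clique_model F S (h : nat) (phi : nat -> {set W}) : Prop :=
  (forall i, i < h -> [/\ phi i != set0, phi i \subset S & connected_in F (phi i)]) /\
  (forall i j, i < h -> j < h -> i != j ->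
     [disjoint phi i & phi j] /\ exists x y, [/\ x \in phi i, y \in phi j & F x y]).

Definition nbh_in F S x : {set W} := [set y in S | F x y].
Definition degsum F S : nat := \sum_(x in S) #|nbh_in F S x|.

Lemma degsum_strict F G S u w :
  (forall x y, F x y -> G x y) -> u \in S -> w \in S -> G u w -> ~~ F u w ->
  degsum F S < degsum G S.
Proof.
move=> FG uS wS Guw nFuw; rewrite /degsum (big_setD1 u uS) [X in _ < X](big_setD1 u uS) /=.
have sub x : nbh_in F S x \subset nbh_in G S x.
  by apply/subsetP => y; rewrite !inE => /andP[-> /FG].
rewrite -addSn leq_add ?leq_sum // => [|x _]; last exact: subset_leq_card.
apply: proper_card; rewrite properE sub /=.
by apply/subsetPn; exists w; rewrite !inE ?wS ?Guw // (negbTE nFuw).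
Qed.

(* Contraction of the edge vw into w: w inherits the neighbours of v.  The
   result is only ever used on vertex sets avoiding v. *)
Definition contract F (v w : W) : rel W :=
  [rel x y | (x != y) && [|| F x y, (x == w) && F v y | (y == w) && F x v]].

Lemma contract_sym F v w : symmetric F -> symmetric (contract F v w).
Proof.
move=> sF x y; rewrite /contract /= eq_sym (sF y x) (sF v x) (sF v y).
by case: (x == w); case: (y == w); case: (F x y); case: (F y v); case: (F x v).
Qed.

Lemma contract_irr F v w : irreflexive (contract F v w).
Proof. by move=> x; rewrite /contract /= eqxx. Qed.

Definition uncontract (v w : W) B : {set W} := if w \in B then v |: B else B.

Lemma mem_uncontract v w B z :
  (z \in uncontract v w B) = (z \in B) || ((z == v) && (w \in B)).
Proof.
by rewrite /uncontract; case: ifP => wB; rewrite ?inE ?andbT ?andbF ?orbF // orbC.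
Qed.

Lemma uncontract_connected F v w B :
  symmetric F -> F v w -> connected_in (contract F v w) B ->
  connected_in F (uncontract v w B).
Proof.
move=> sF Fvw cB; set B' := uncontract v w B.
have inB z : z \in B -> z \in B' by rewrite mem_uncontract => ->.
have vB' : w \in B -> v \in B' by rewrite mem_uncontract eqxx => ->; rewrite orbT.
apply: (connected_in_lift sF cB) => [a b aB bB|z].
  case/andP=> _ /or3P[Fab|/andP[/eqP aw Fvb]|/andP[/eqP bw Fav]].
  - by apply: connect1; rewrite /restrict /= !inB.
  - have wB : w \in B by rewrite -aw.
    apply: (@connect_trans _ _ v); apply: connect1; rewrite /restrict /= vB' //.
      by rewrite inB // aw sF.
    by rewrite inB.
  - have wB : w \in B by rewrite -bw.
    apply: (@connect_trans _ _ v); apply: connect1; rewrite /restrict /= vB' //.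
      by rewrite inB.
    by rewrite inB // bw.
rewrite mem_uncontract => /orP[zB|/andP[/eqP-> wB]].
  by exists z => //; apply: connect0.
by exists w => //; apply: connect1; rewrite /restrict /= vB' ?inB.
Qed.

Lemma uncontract_disjoint v w B1 B2 :
  v \notin B1 -> v \notin B2 -> [disjoint B1 & B2] ->
  [disjoint uncontract v w B1 & uncontract v w B2].
Proof.
move=> nvB1 nvB2 dB; rewrite disjoints_subset; apply/subsetP => z.
rewrite !inE !mem_uncontract negb_or => /orP[zB1|/andP[/eqP-> wB1]].
  rewrite (disjointFr dB zB1) /=.
  by apply: contraTN zB1 => /andP[/eqP-> _].
by rewrite (negbTE nvB2) (disjointFr dB wB1) andbF.
Qed.

Lemma uncontract_adjacent F v w B1 B2 x y :
  symmetric F -> x \in B1 -> y \in B2 -> contract F v w x y ->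
  exists x' y', [/\ x' \in uncontract v w B1, y' \in uncontract v w B2 & F x' y'].
Proof.
move=> sF xB1 yB2 /andP[_ /or3P[Fxy|/andP[/eqP xw Fvy]|/andP[/eqP yw Fxv]]].
- by exists x, y; rewrite !mem_uncontract xB1 yB2.
- by exists v, y; rewrite !mem_uncontract yB2 eqxx -xw xB1 orbT.
- by exists x, v; rewrite !mem_uncontract xB1 eqxx -yw yB2 orbT.
Qed.

Lemma clique_model_uncontract F S v w h phi :
  symmetric F -> v \in S -> F v w ->
  clique_model (contract F v w) (S :\ v) h phi ->
  clique_model F S h (fun i => uncontract v w (phi i)).
Proof.
move=> sF vS Fvw [branch pairs].
have nv i : i < h -> v \notin phi i.
  move=> hi; have [_ /subsetP sub _] := branch i hi.
  by apply/negP => /sub; rewrite !inE eqxx.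
split=> [i hi|i j hi hj ij].
  have [ne sub cn] := branch i hi; split.
  - have [z zi] := set0Pn _ ne.
    by apply/set0Pn; exists z; rewrite mem_uncontract zi.
  - apply/subsetP => z; rewrite mem_uncontract => /orP[/(subsetP sub)|/andP[/eqP-> _]//].
    by rewrite inE => /andP[].
  - exact: uncontract_connected.
have [dis [x [y [xi yj Fxy]]]] := pairs i j hi hj ij.
by split; [apply: uncontract_disjoint; rewrite ?nv | apply: uncontract_adjacent Fxy].
Qed.

Definition common_nbh F S (v w : W) : {set W} := nbh_in F (nbh_in F S v) w.

Lemma mem_common_nbh F S v w x :
  (x \in common_nbh F S v w) = [&& x \in S, F v x & F w x].
Proof. by rewrite !inE andbA. Qed.

Lemma deg_contract_other F S v w x :
  symmetric F -> irreflexive F -> v \in S -> w \in S :\ v -> x \in S :\ v :\ w ->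
  #|nbh_in F S x| <= #|nbh_in (contract F v w) (S :\ v) x| + (x \in common_nbh F S v w).
Proof.
move=> sF iF vS wS /setD1P[xw /setD1P[xv xS]].
set N' := nbh_in (contract F v w) (S :\ v) x.
have sub : nbh_in F S x :\ v \subset N'.
  apply/subsetP => y; rewrite !inE => /and3P[yv yS Fxy].
  by rewrite yv yS /contract /= Fxy andbT; apply: contraTneq Fxy => <-; rewrite iF.
rewrite (cardsD1 v) inE vS mem_common_nbh xS [F v x]sF [F w x]sF /=.
case Fxv: (F x v); last by rewrite add0n addnC (leq_trans (subset_leq_card sub)) ?leq_addl.
case Fxw: (F x w); first by rewrite addnC leq_add2r subset_leq_card.
have -> : true + #|nbh_in F S x :\ v| = #|w |: (nbh_in F S x :\ v)|.
  by rewrite cardsU1 !inE Fxw !andbF.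
rewrite andbF addn0.
apply: subset_leq_card; apply/subsetP => y; rewrite in_setU1 => /orP[/eqP->|/(subsetP sub)//].
by rewrite inE wS /contract /= xw eqxx Fxv !orbT.
Qed.

(* The merged vertex w keeps every neighbour of v and of w except v and w
   themselves; only common neighbours are counted once instead of twice. *)
Lemma deg_contract_merged F S v w :
  symmetric F -> irreflexive F -> v \in S -> w \in S -> F v w ->
  #|nbh_in F S v| + #|nbh_in F S w| <=
    #|nbh_in (contract F v w) (S :\ v) w| + 2 + #|common_nbh F S v w|.
Proof.
move=> sF iF vS wS Fvw.
set A := nbh_in F S v :\ w; set B := nbh_in F S w :\ v.
have -> : #|nbh_in F S v| = #|A|.+1 by rewrite (cardsD1 w) !inE wS Fvw.
have -> : #|nbh_in F S w| = #|B|.+1 by rewrite (cardsD1 v) !inE vS sF Fvw.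
have sU : A :|: B \subset nbh_in (contract F v w) (S :\ v) w.
  apply/subsetP => y; rewrite !inE => /orP[/and3P[yw yS Fvy]|/and3P[yv yS Fwy]].
  - have yv : y != v by apply: contraTneq Fvy => ->; rewrite iF.
    by rewrite yv yS /contract /= eq_sym yw eqxx Fvy orbT.
  - have wy : w != y by apply: contraTneq Fwy => <-; rewrite iF.
    by rewrite yv yS /contract /= wy Fwy.
have sI : A :&: B \subset common_nbh F S v w.
  apply/subsetP => y; rewrite !inE => /andP[/and3P[_ yS Fvy] /and3P[_ _ Fwy]].
  by rewrite yS Fvy Fwy.
rewrite addSn addnS -cardsUI addnAC addn2 !ltnS.
by apply: leq_add; apply: subset_leq_card.
Qed.

(* Contracting an edge vw removes at most 2 + 2|N(v) ∩ N(w)| from the degree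
   sum: two for the edge vw itself and two for each triangle through it. *)
Lemma degsum_contract F S v w :
  symmetric F -> irreflexive F -> v \in S -> w \in S -> F v w ->
  degsum F S <= degsum (contract F v w) (S :\ v) + 2 + 2 * #|common_nbh F S v w|.
Proof.
move=> sF iF vS wS Fvw.
have wSv : w \in S :\ v by rewrite !inE wS andbT; apply: contraTneq Fvw => ->; rewrite iF.
set C := common_nbh F S v w; set F' := contract F v w; set R := S :\ v :\ w.
have ind : \sum_(x in R) (x \in C : nat) <= #|C|.
  rewrite -big_mkcondr /= sum1dep_card; apply/subset_leq_card/subsetP => x.
  by rewrite inE => /andP[].
have rest : \sum_(x in R) #|nbh_in F S x| <= \sum_(x in R) #|nbh_in F' (S :\ v) x| + #|C|.
  rewrite (leq_trans (leq_sum _ (fun x xR => deg_contract_other sF iF vS wSv xR))) //.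
  by rewrite big_split leq_add2l.
have merged_deg := deg_contract_merged sF iF vS wS Fvw.
rewrite /degsum (big_setD1 v vS) (big_setD1 w wSv) (big_setD1 w wSv) /= -/R.
move: rest merged_deg; rewrite -/F' -/C; lia.
Qed.

Lemma clique_model_extend F S v h phi :
  symmetric F -> irreflexive F -> v \in S -> clique_model F (nbh_in F S v) h phi ->
  clique_model F S h.+1 (fun i => if i == h then [set v] else phi i).
Proof.
move=> sF iF vS [branch pairs].
have inN j : j < h -> phi j \subset nbh_in F S v by move=> hj; have [] := branch j hj.
have nv j : j < h -> v \notin phi j.
  by move=> hj; apply/negP => /(subsetP (inN j hj)); rewrite inE iF andbF.
have adj j : j < h -> exists2 y, y \in phi j & F v y.
  move=> hj; have [ne _ _] := branch j hj; have [y yj] := set0Pn _ ne.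
  by exists y => //; move: (subsetP (inN j hj) y yj); rewrite inE => /andP[].
have NS : nbh_in F S v \subset S by apply/subsetP => z; rewrite inE => /andP[].
have lt_h i : i < h.+1 -> i != h -> i < h.
  by move=> + /negbTE ih; rewrite ltnS leq_eqVlt ih.
split=> [i hi|i j hi hj ij].
  case: (eqVneq i h) => [_|ih].
    split; [by apply/set0Pn; exists v; rewrite inE | by rewrite sub1set |].
    by move=> x y /set1P-> /set1P->; apply: connect0.
  have [ne sub cn] := branch i (lt_h i hi ih).
  by split=> //; apply: subset_trans sub NS.
case: (eqVneq i h) => [ih|ih]; case: (eqVneq j h) => [jh|jh].
- by move: ij; rewrite ih jh eqxx.
- have [y yj Fvy] := adj j (lt_h j hj jh).
  by split; [rewrite disjoints1 nv ?lt_h | exists v, y; rewrite inE eqxx].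
- have [y yi Fvy] := adj i (lt_h i hi ih).
  by split; [rewrite disjoint_sym disjoints1 nv ?lt_h | exists y, v; rewrite inE eqxx sF].
- exact: pairs (lt_h i hi ih) (lt_h j hj jh) ij.
Qed.

(* If no contraction of an edge vw keeps density d.*2.+2, then every such
   edge lies in more than d triangles, so N_S(v) has density d. *)
Lemma dense_nbhd F S v d :
  symmetric F -> irreflexive F -> v \in S -> d.*2.+2 * #|S| <= degsum F S ->
  (forall w, w \in nbh_in F S v ->
     degsum (contract F v w) (S :\ v) < d.*2.+2 * #|S :\ v|) ->
  d * #|nbh_in F S v| <= degsum F (nbh_in F S v).
Proof.
move=> sF iF vS dense no_contract.
rewrite /degsum mulnC -sum_nat_const; apply: leq_sum => w wN.
have [wS Fvw] : w \in S /\ F v w by move: wN; rewrite inE => /andP[].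
have := degsum_contract sF iF vS wS Fvw; have := no_contract w wN.
move: dense; rewrite (cardsD1 v S) vS add1n mulnS -!mul2n.
set P := _ * #|S :\ v|; rewrite /common_nbh; lia.
Qed.

(* Mader's bound: 2^(h+1) - 2, defined by the recursion used in the proof. *)
Fixpoint mader_const (h : nat) : nat :=
  if h is h'.+1 then (mader_const h').*2.+2 else 0.

(* Induction on h and, inside, on the order:
   either some edge vw can be contracted keeping the density, or the
   neighbourhood of v is dense enough to contain a K_(h-1)-minor. *)
Theorem mader h F S :
  symmetric F -> irreflexive F -> S != set0 -> mader_const h * #|S| <= degsum F S ->
  exists phi, clique_model F S h phi.
Proof.
elim: h F S => [|h IHh] F S; first by exists (fun _ => set0); split.
have [n] := ubnP #|S|; elim: n => // n IHn in F S *.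
move=> ltSn sF iF neS dense.
have [v vS /set0Pn[w0 w0N]] : exists2 v, v \in S & nbh_in F S v != set0.
  apply/exists_inP; apply: contraLR dense; rewrite negb_exists_in => /forall_inP N0.
  rewrite /degsum big1 => [|x /N0 /negPn/eqP->]; last by rewrite cards0.
  by rewrite -ltnNge muln_gt0 card_gt0 neS.
case: (boolP [exists w in nbh_in F S v,
               mader_const h.+1 * #|S :\ v| <= degsum (contract F v w) (S :\ v)]).
  case/exists_inP=> w /setIdP[wS Fvw] dense_w.
  have vw : v != w by apply: contraTneq Fvw => ->; rewrite iF.
  have [phi model] : exists phi, clique_model (contract F v w) (S :\ v) h.+1 phi.
    apply: IHn => //; [by move: ltSn; rewrite (cardsD1 v S) vS | exact: contract_sym |
      exact: contract_irr | by apply/set0Pn; exists w; rewrite !inE eq_sym vw].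
  by exists (fun i => uncontract v w (phi i)); apply: clique_model_uncontract.
rewrite negb_exists_in => /forall_inP no_contract.
have [phi model] : exists phi, clique_model F (nbh_in F S v) h phi.
  apply: IHh => //; first by apply/set0Pn; exists w0.
  by apply: dense_nbhd => // w /no_contract; rewrite -ltnNge.
by eexists; apply: clique_model_extend model.
Qed.

Definition sparse F S (g : nat) : Prop :=
  forall S', S' \subset S -> S' != set0 -> degsum F S' < g * #|S'|.

Definition clique F (K : {set W}) : bool :=
  [forall x in K, forall y in K, (x != y) ==> F x y].

Definition cliques F S : {set {set W}} := [set K : {set W} | (K \subset S) && clique F K].

Lemma clique_mono F G K : (forall x y, F x y -> G x y) -> clique F K -> clique G K.
Proof.
move=> FG /forall_inP cK; apply/forall_inP => x xK; apply/forall_inP => y yK.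
by apply/implyP => xy; apply: FG; move: (cK x xK) => /forall_inP/(_ y yK)/implyP; apply.
Qed.

Lemma low_degree_vertex F S g :
  degsum F S < g * #|S| -> exists2 v, v \in S & #|nbh_in F S v| < g.
Proof.
move=> small; apply/exists_inP; apply: contraLR small.
rewrite negb_exists_in => /forall_inP high.
by rewrite -leqNgt mulnC -sum_nat_const; apply: leq_sum => x /high; rewrite -leqNgt.
Qed.

Lemma cliques_split F S v :
  v \in S -> cliques F S \subset cliques F (S :\ v) :|: powerset (v |: nbh_in F S v).
Proof.
move=> vS; apply/subsetP => K; rewrite !inE => /andP[KS cK].
have [vK|vK] := boolP (v \in K).
  apply/orP; right; apply/subsetP => y yK; rewrite !inE (subsetP KS y yK) /=.
  have [//|yv] := eqVneq y v.
  by move/forall_inP: cK => /(_ v vK)/forall_inP/(_ y yK); rewrite eq_sym yv.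
apply/orP; left; rewrite cK andbT; apply/subsetP => y yK.
by rewrite !inE (subsetP KS y yK) andbT; apply: contraNneq vK => <-.
Qed.

(* A g-sparse graph on S has at most 2^g |S| + 1 cliques: peel off a vertex
   of degree below g, which lies in at most 2^g cliques. *)
Lemma clique_count F S g : sparse F S g -> #|cliques F S| <= 2 ^ g * #|S| + 1.
Proof.
have [n] := ubnP #|S|; elim: n => // n IHn in S *; move=> ltSn sp.
have [->|neS] := eqVneq S set0.
  rewrite cards0 muln0 (leq_trans (subset_leq_card (_ : _ \subset [set set0]))) ?cards1 //.
  by apply/subsetP => K; rewrite !inE subset0 => /andP[].
have [v vS lowv] := low_degree_vertex (sp S (subxx S) neS).
have IH : #|cliques F (S :\ v)| <= 2 ^ g * #|S :\ v| + 1.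
  apply: IHn => [|S' S'S]; first by move: ltSn; rewrite (cardsD1 v S) vS.
  by apply: sp; apply: subset_trans S'S (subD1set S v).
have pw : #|powerset (v |: nbh_in F S v)| <= 2 ^ g.
  rewrite card_powerset leq_pexp2l // cardsU1.
  by apply: leq_trans lowv; rewrite -add1n leq_add2r leq_b1.
rewrite (leq_trans (subset_leq_card (cliques_split F vS))) //.
rewrite (leq_trans (leq_card_setU _ _)) // (cardsD1 v S) vS mulnDr muln1.
by rewrite -addnA [2 ^ g + _]addnC leq_add.
Qed.

End Graphs.

Section MergedGraph.

Variables (T : finType) (e : rel T).
Implicit Types (f : T -> T) (B C S : {set T}).

(* Contract every edge y -- f y with y in C into f y and forget the rest of C:
   x and x' become adjacent when some y in C with f y = x sees x'. *)
Definition merged f C : rel T :=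
  [rel x x' | (x != x') &&
     [exists y in C, ((f y == x) && e y x') || ((f y == x') && e y x)]].

Lemma merged_sym f C : symmetric (merged f C).
Proof.
move=> x x'; rewrite /merged /= eq_sym; congr (_ && _).
by apply: eq_existsb => y; rewrite orbC.
Qed.

Lemma merged_irr f C : irreflexive (merged f C).
Proof. by move=> x; rewrite /merged /= eqxx. Qed.

Lemma merged_mono f f' C C' :
  C \subset C' -> {in C, f' =1 f} -> forall x x', merged f C x x' -> merged f' C' x x'.
Proof.
move=> CC' ff' x x' /andP[xx' /exists_inP[y yC ey]]; rewrite /merged /= xx'.
by apply/exists_inP; exists y; rewrite ?(subsetP CC') ?ff'.
Qed.

Definition attach f C B : {set T} := B :|: [set y in C | f y \in B].

Lemma attach_connected f C B :
  symmetric e -> {in C, forall y, e y (f y)} ->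
  connected_in (merged f C) B -> connected_in e (attach f C B).
Proof.
move=> se fC cB; set B' := attach f C B.
have inB x : x \in B -> x \in B' by move=> xB; rewrite inE xB.
have yB' y : y \in C -> f y \in B -> y \in B' by move=> yC fyB; rewrite !inE yC fyB orbT.
apply: (connected_in_lift se cB) => [x x' xB x'B|z].
  case/andP=> _ /exists_inP[y yC /orP[/andP[/eqP fyx eyx']|/andP[/eqP fyx' eyx]]].
  - have yB : y \in B' by apply: yB'; rewrite ?fyx.
    apply: (@connect_trans _ _ y); apply: connect1; rewrite /restrict /= yB !inB //.
    by rewrite se -fyx fC.
  - have yB : y \in B' by apply: yB'; rewrite ?fyx'.
    apply: (@connect_trans _ _ y); apply: connect1; rewrite /restrict /= yB !inB //.
      by rewrite se.
    by rewrite -fyx' fC.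
rewrite !inE => /orP[zB|/andP[zC fzB]]; first by exists z => //; apply: connect0.
by exists (f z) => //; apply: connect1; rewrite /restrict /= yB' ?inB ?fC.
Qed.

Lemma attach_disjoint f C B1 B2 :
  [disjoint B1 & C] -> [disjoint B2 & C] -> [disjoint B1 & B2] ->
  [disjoint attach f C B1 & attach f C B2].
Proof.
move=> d1 d2 d12; rewrite disjoints_subset; apply/subsetP => z.
rewrite !inE negb_or => /orP[zB1|/andP[zC fzB1]].
  by rewrite (disjointFr d12 zB1) (disjointFr d1 zB1).
by rewrite (disjointFl d2 zC) (disjointFr d12 fzB1) andbF.
Qed.

Lemma attach_adjacent f C B1 B2 x x' :
  symmetric e -> x \in B1 -> x' \in B2 -> merged f C x x' ->
  exists y y', [/\ y \in attach f C B1, y' \in attach f C B2 & e y y'].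
Proof.
move=> se xB1 x'B2 /andP[_ /exists_inP[y yC /orP[/andP[/eqP fyx eyx']|/andP[/eqP fyx' eyx]]]].
  by exists y, x'; rewrite !inE yC fyx xB1 x'B2 orbT.
by exists x, y; rewrite !inE yC fyx' xB1 x'B2 se orbT.
Qed.

Lemma clique_model_attach f C S h phi :
  symmetric e -> {in C, forall y, e y (f y)} -> [disjoint S & C] ->
  clique_model (merged f C) S h phi ->
  clique_model e setT h (fun i => attach f C (phi i)).
Proof.
move=> se fC dSC [branch pairs].
have dC i : i < h -> [disjoint phi i & C].
  by move=> hi; have [_ sub _] := branch i hi; apply: disjointWl sub dSC.
split=> [i hi|i j hi hj ij].
  have [ne _ cn] := branch i hi; split; rewrite ?subsetT //; last exact: attach_connected.
  by have [x xi] := set0Pn _ ne; apply/set0Pn; exists x; rewrite inE xi.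
have [dis [x [x' [xi x'j mxx']]]] := pairs i j hi hj ij.
by split; [apply: attach_disjoint; rewrite ?dC | apply: attach_adjacent mxx'].
Qed.

Definition redirect f (y0 u : T) : T -> T := fun z => if z == y0 then u else f z.

Lemma merged_redirect f C y0 u :
  y0 \notin C -> forall x x', merged f C x x' -> merged (redirect f y0 u) (y0 |: C) x x'.
Proof.
move=> y0C; apply: merged_mono; first exact: subsetUr.
by move=> y yC; rewrite /redirect; case: eqP => // yy0; rewrite -yy0 yC in y0C.
Qed.

Lemma merged_redirect_new f C y0 u w :
  u != w -> e y0 w -> merged (redirect f y0 u) (y0 |: C) u w.
Proof.
move=> uw ey0w; rewrite /merged /= uw; apply/exists_inP; exists y0.
  exact: setU11.
by rewrite /redirect eqxx eqxx ey0w.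
Qed.

(* Greedy merging: for vertices Z whose neighbourhoods lie in X, merge a set
   C of them, each into one of its neighbours, so that every merge created a
   new edge on X (hence |C| is at most the degree sum on X) and every unmerged
   vertex of Z has a clique as neighbourhood. *)
Lemma greedy_merge (X Z : {set T}) :
  {in Z, forall y, nbhd e y \subset X} ->
  exists f C, [/\ C \subset Z, {in C, forall y, e y (f y)},
    #|C| <= degsum (merged f C) X &
    {in Z :\: C, forall y, clique (merged f C) (nbhd e y)}].
Proof.
have [n] := ubnP #|Z|; elim: n => // n IHn in Z *; move=> ltZn ZX.
have [->|/set0Pn[y0 y0Z]] := eqVneq Z set0.
  by exists id, set0; split=> [|y||y]; rewrite ?sub0set ?cards0 ?inE ?andbF.
have ltZ' : #|Z :\ y0| < n by move: ltZn; rewrite (cardsD1 y0 Z) y0Z.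
have ZX' : {in Z :\ y0, forall y, nbhd e y \subset X} by move=> y /setD1P[_ /ZX].
have [f [C [CZ fC cC clC]]] := IHn (Z :\ y0) ltZ' ZX'.
have y0C : y0 \notin C by apply: contraTN y0Z => /(subsetP CZ); rewrite !inE eqxx.
have CZ' : C \subset Z by apply: subset_trans CZ (subD1set Z y0).
have [cl0|/forall_inPn[u uN /forall_inPn[w wN]]] := boolP (clique (merged f C) (nbhd e y0)).
  exists f, C; split=> // y /setDP[yZ yC].
  by have [->//|yy0] := eqVneq y y0; apply: clC; rewrite !inE yy0 yZ yC.
rewrite negb_imply => /andP[uw nuw].
exists (redirect f y0 u), (y0 |: C); split.
- by rewrite subUset sub1set y0Z CZ'.
- move=> y; rewrite /redirect in_setU1; case: eqP => [-> _|_ /= yC]; last exact: fC.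
  by move: uN; rewrite inE.
- rewrite cardsU1 y0C add1n; apply: leq_ltn_trans cC _.
  apply: (degsum_strict (merged_redirect u y0C) _ _ (merged_redirect_new f C uw _) nuw).
  + exact: subsetP (ZX y0 y0Z) u uN.
  + exact: subsetP (ZX y0 y0Z) w wN.
  + by move: wN; rewrite inE.
- move=> y /setDP[yZ]; rewrite in_setU1 negb_or => /andP[yy0 yC].
  by apply: clique_mono (merged_redirect u y0C) (clC y _); rewrite !inE yy0 yZ yC.
Qed.

End MergedGraph.

Lemma clique_model_minor (V : finType) (eH : rel V) (T : finType) (e : rel T)
    (S : {set T}) phi :
  irreflexive eH -> clique_model e S #|V| phi -> is_minor eH e.
Proof.
move=> iH [branch pairs].
have neq u v : u != v -> enum_rank u != enum_rank v :> nat.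
  by apply: contra => /eqP/val_inj/enum_rank_inj ->.
exists (fun v => phi (enum_rank v)); split.
- by move=> v; have [] := branch _ (ltn_ord (enum_rank v)).
- by move=> v; have [] := branch _ (ltn_ord (enum_rank v)).
- by move=> u v /neq uv; have [] := pairs _ _ (ltn_ord _) (ltn_ord _) uv.
- move=> u v euv.
  have /neq uv : u != v by apply: contraTneq euv => ->; rewrite iH.
  by have [] := pairs _ _ (ltn_ord _) (ltn_ord _) uv.
Qed.

Lemma nbhd_sub_part (T : finType) (e : rel T) (X Y : {set T}) :
  bipartition e X Y -> {in Y, forall y, nbhd e y \subset X}.
Proof.
move=> [XY _ part] y yY; apply/subsetP => x; rewrite inE => /part[[yX _]|[_ //]].
by move/setP: XY => /(_ y); rewrite !inE yX yY.
Qed.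

Theorem lemma6p1 :
  forall (V : finType) (eH : rel V), simple_graph eH ->
  exists c : nat,
    forall (T : finType) (e : rel T) (X Y : {set T}),
      simple_graph e ->
      minor_free eH e ->
      bipartition e X Y ->
      (forall u v, u \in Y -> v \in Y -> u != v -> ~~ (nbhd e u \subset nbhd e v)) ->
      (0 < #|X|)%N ->
      (#|Y| <= c * #|X|)%N.
Proof.
move=> V eH [_ iH]; set g := mader_const #|V|.
exists (g + 2 ^ g + 1) => T e X Y [se _] mf bip antichain Xpos.
have YX := nbhd_sub_part bip.
have [f [C [CY fC cC clC]]] := greedy_merge YX.
(* The merged graph is a minor of e, so it is g-sparse on X by Mader. *)
have sp : sparse (merged e f C) X g.
  move=> S SX neS; rewrite ltnNge; apply/negP => /(mader (merged_sym e f C) (merged_irr e f C) neS).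
  case=> phi /(clique_model_attach se fC) model; apply/mf/(clique_model_minor iH)/model.
  case: bip => XY _ _; rewrite -setI_eq0 -subset0 -XY; exact: setISS SX CY.
have cardC : #|C| < g * #|X|.
  by apply: leq_ltn_trans cC (sp X (subxx X) _); rewrite -card_gt0.
(* Unmerged vertices of Y have pairwise distinct neighbourhoods, all cliques. *)
have cardYC : #|Y :\: C| <= 2 ^ g * #|X| + 1.
  apply: leq_trans (clique_count sp); rewrite -(@card_in_imset _ _ (nbhd e)).
    apply/subset_leq_card/subsetP => K /imsetP[y yYC ->].
    by rewrite inE clC // andbT YX //; case/setDP: yYC.
  move=> u v /setDP[uY _] /setDP[vY _] Nuv; apply/eqP; apply: contraT => uv.
  by move: (antichain u v uY vY uv); rewrite Nuv subxx.
have := cardsID C Y; have : #|Y :&: C| <= #|C| by apply/subset_leq_card/subsetIr.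
move: cardC cardYC Xpos; nia.
Qed.
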